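(* $\mathbf{FO}(\mathrm{NE},\sqcup,\sim)=\mathbf{FO}(\mathrm{NE},\sqcup)$: every formula of $\mathbf{FO}(\mathrm{NE},\sqcup,\sim)$ is equivalent to some formula of $\mathbf{FO}(\mathrm{NE},\sqcup)$ (and conversely).
   Context: Team semantics (lax version). For a structure $\mathfrak M$ with domain $M$, a team $X$ is a (possibly empty) set of assignments $s:V\to M$, $V$ a finite set of variables. Satisfaction for formulas in negation normal form: first-order literal $\alpha$: every $s\in X$ satisfies $\alpha$ (Tarski); $\psi\vee\theta$: $X=Y\cup Z$ with $\mathfrak M\models_Y\psi$, $\mathfrak M\models_Z\theta$; $\psi\wedge\theta$: both; $\exists v\psi$: some $F:X\to\mathcal P(M)\setminus\{\emptyset\}$ with $\mathfrak M\models_{X[F/v]}\psi$, $X[F/v]=\{s[m/v]:s\in X,m\in F(s)\}$; $\forall v\psi$: $\mathfrak M\models_{X[M/v]}\psi$, $X[M/v]=\{s[m/v]:s\in X,m\in M\}$. $\mathfrak M\models_X\mathrm{NE}$ iff $X\ne\emptyset$; $\mathfrak M\models_X\phi\sqcup\psi$ iff $\mathfrak M\models_X\phi$ or $\mathfrak M\models_X\psi$; contradictory negation $\mathfrak M\models_X\sim\phi$ iff $\mathfrak M\not\models_X\phi$ (applicable to arbitrary formulas). Two formulas are equivalent if satisfied by the same teams in all structures. *)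

From mathcomp Require Import all_boot.
Set Implicit Arguments.
Unset Strict Implicit.
Unset Printing Implicit Defensive.

Record signature := Signature {
  fsym : Type; far : fsym -> nat;
  rsym : Type; rar : rsym -> nat }.

Inductive term (L : signature) : Type :=
  | Var : nat -> term L
  | App : forall f : fsym L, ('I_(far f) -> term L) -> term L.

(* Formulas in negation normal form, extended with NE, global disjunction
   \sqcup (GOr) and contradictory negation ~ (CNeg, applicable to any formula). *)
Inductive formula (L : signature) : Type :=
  | Eq   : term L -> term L -> formula L
  | NEq  : term L -> term L -> formula L
  | Rel  : forall r : rsym L, ('I_(rar r) -> term L) -> formula L
  | NRel : forall r : rsym L, ('I_(rar r) -> term L) -> formula L
  | And  : formula L -> formula L -> formula L
  | Or   : formula L -> formula L -> formula L    (* tensor / split disjunction *)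
  | Ex   : nat -> formula L -> formula L
  | All  : nat -> formula L -> formula L
  | NE   : formula L
  | GOr  : formula L -> formula L -> formula L
  | CNeg : formula L -> formula L.

Fixpoint neg_free (L : signature) (phi : formula L) : bool :=
  match phi with
  | And a b | Or a b | GOr a b => neg_free a && neg_free b
  | Ex _ a | All _ a => neg_free a
  | CNeg _ => false
  | _ => true
  end.

Record structure (L : signature) := Structure {
  dom : Type;
  dom_inhabited : dom;
  fint : forall f : fsym L, ('I_(far f) -> dom) -> dom;
  rint : forall r : rsym L, ('I_(rar r) -> dom) -> Prop }.

Definition assignment L (A : structure L) := nat -> dom A.
Definition team L (A : structure L) := assignment A -> Prop.

Definition upd L (A : structure L) (s : assignment A) (v : nat) (m : dom A)
  : assignment A := fun w => if w == v then m else s w.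

Fixpoint teval L (A : structure L) (s : assignment A) (t : term L) : dom A :=
  match t with
  | Var n => s n
  | App f args => @fint L A f (fun i => teval s (args i))
  end.

Definition lit L (A : structure L) (s : assignment A) (phi : formula L) : Prop :=
  match phi with
  | Eq t1 t2 => teval s t1 = teval s t2
  | NEq t1 t2 => teval s t1 <> teval s t2
  | Rel r ts => @rint L A r (fun i => teval s (ts i))
  | NRel r ts => ~ @rint L A r (fun i => teval s (ts i))
  | _ => True
  end.

(* Lax team semantics *)
Fixpoint sat L (A : structure L) (phi : formula L) (X : team A) : Prop :=
  match phi with
  | Eq _ _ | NEq _ _ | Rel _ _ | NRel _ _ => forall s, X s -> lit s phi
  | And a b => sat a X /\ sat b X
  | Or a b => exists (Y Z : team A),
      (forall s, X s <-> (Y s \/ Z s)) /\ sat a Y /\ sat b Z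
  | Ex v a => exists F : assignment A -> dom A -> Prop,
      (forall s, X s -> exists m, F s m) /\
      sat a (fun s' => exists s m, [/\ X s, F s m & s' = upd s v m])
  | All v a => sat a (fun s' => exists s m, X s /\ s' = upd s v m)
  | NE => exists s, X s
  | GOr a b => sat a X \/ sat b X
  | CNeg a => ~ sat a X
  end.

Definition equivalent L (phi psi : formula L) : Prop :=
  forall (A : structure L) (X : team A), sat phi X <-> sat psi X.

(* Call a formula basic if it has the form  a /\ /\_i (b_i /\ NE \/ T)  with a
   and the b_i first-order; a team satisfies it iff all of its members satisfy a
   and every b_i is satisfied by some member.  Finite \sqcup-disjunctions of basic
   formulas (normal forms) lie in FO(NE, \sqcup), and they are closed under every
   connective, contradictory negation included: ~ of a basic formula says that
   some member violates a or that some b_i is violated by all members, which is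
   again a normal form, and ~ turns \sqcup into /\, which distributes over
   \sqcup.  So every formula has an equivalent normal form. *)

From mathcomp Require Import all_boot.
From Stdlib Require Import Classical Morphisms.
Require Stdlib.Lists.List.

Set Implicit Arguments.
Unset Strict Implicit.
Unset Printing Implicit Defensive.

Section NormalForm.
Variable L : signature.

Inductive fo : Type :=
  | FEq of term L & term L
  | FNEq of term L & term L
  | FRel (r : rsym L) of 'I_(rar r) -> term L
  | FNRel (r : rsym L) of 'I_(rar r) -> term L
  | FAnd of fo & fo
  | FOr of fo & fo
  | FEx of nat & fo
  | FAll of nat & fo.

Fixpoint fo_formula (a : fo) : formula L :=
  match a with
  | FEq t1 t2 => Eq t1 t2
  | FNEq t1 t2 => NEq t1 t2
  | FRel _ ts => Rel ts
  | FNRel _ ts => NRel ts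
  | FAnd a b => And (fo_formula a) (fo_formula b)
  | FOr a b => Or (fo_formula a) (fo_formula b)
  | FEx v a => Ex v (fo_formula a)
  | FAll v a => All v (fo_formula a)
  end.

Fixpoint fneg (a : fo) : fo :=
  match a with
  | FEq t1 t2 => FNEq t1 t2
  | FNEq t1 t2 => FEq t1 t2
  | FRel _ ts => FNRel ts
  | FNRel _ ts => FRel ts
  | FAnd a b => FOr (fneg a) (fneg b)
  | FOr a b => FAnd (fneg a) (fneg b)
  | FEx v a => FAll v (fneg a)
  | FAll v a => FEx v (fneg a)
  end.

Fixpoint tsat (A : structure L) (a : fo) (s : assignment A) : Prop :=
  match a with
  | FEq t1 t2 => teval s t1 = teval s t2
  | FNEq t1 t2 => teval s t1 <> teval s t2
  | FRel r ts => rint (fun i => teval s (ts i))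
  | FNRel r ts => ~ rint (fun i => teval s (ts i))
  | FAnd a b => tsat a s /\ tsat b s
  | FOr a b => tsat a s \/ tsat b s
  | FEx v a => exists m, tsat a (upd s v m)
  | FAll v a => forall m, tsat a (upd s v m)
  end.

Definition ftrue : fo := FEq (@Var L 0) (@Var L 0).

Lemma tsat_fneg A a (s : assignment A) : tsat (fneg a) s <-> ~ tsat a s.
Proof.
elim: a s => /= [t1 t2|t1 t2|r ts|r ts|a IHa b IHb|a IHa b IHb|v a IH|v a IH] s.
- by [].
- by split; [tauto | apply: NNPP].
- by [].
- by split; [tauto | apply: NNPP].
- by rewrite IHa IHb; tauto.
- by rewrite IHa IHb; tauto.
- setoid_rewrite IH; split; [by move=> H [m]; apply: H | exact: not_ex_all_not].
- setoid_rewrite IH; split; [by move=> [m Hm] H; apply: Hm | exact: not_all_ex_not].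
Qed.

Lemma sat_fo A a (X : team A) :
  sat (fo_formula a) X <-> forall s, X s -> tsat a s.
Proof.
elim: a X => //= [a IHa b IHb|a IHa b IHb|v a IH|v a IH] X.
- by rewrite IHa IHb; firstorder.
- split=> [[Y [Z [XYZ [/IHa Ya /IHb Zb]]]] s /XYZ [/Ya|/Zb]|Xab]; [by left|by right|].
  exists (fun s => X s /\ tsat a s), (fun s => X s /\ tsat b s).
  split; last by split; [apply/IHa|apply/IHb] => s [].
  by move=> s; split=> [Xs|[[]|[]] //]; case: (Xab s Xs); [left|right].
- split=> [[F [FX /IH FXa]] s Xs|Xa].
    by have [m Fm] := FX s Xs; exists m; apply: FXa; exists s, m.
  exists (fun s m => tsat a (upd s v m)); split=> //.
  by apply/IH => _ [s [m [_ am ->]]].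
- split=> [/IH Xa s Xs m|Xa]; first by apply: Xa; exists s, m.
  by apply/IH => _ [s [m [Xs ->]]]; apply: Xa.
Qed.

#[local] Instance Exists_proper T :
  Proper (pointwise_relation T iff ==> eq ==> iff) (@List.Exists T).
Proof. by move=> P Q PQ l _ <-; split; apply: List.Exists_impl => x /PQ. Qed.

(* The pair (a, bs) encodes the basic formula a /\ /\_{b in bs} (b /\ NE \/ T). *)
Definition basic := (fo * seq fo)%type.

Definition sat_basic A (X : team A) (p : basic) :=
  (forall s, X s -> tsat p.1 s) /\
  List.Forall (fun b => exists s, X s /\ tsat b s) p.2.

Definition sat_nf A (X : team A) (N : seq basic) := List.Exists (sat_basic X) N.

Definition nf_prod (f : basic -> basic -> basic) (N M : seq basic) :=
  List.flat_map (fun p => List.map (f p) M) N.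
Arguments nf_prod : simpl never.

Lemma sat_nf_prod A (X : team A) f N M :
  sat_nf X (nf_prod f N M) <->
  List.Exists (fun p => List.Exists (fun q => sat_basic X (f p q)) M) N.
Proof.
by rewrite /sat_nf /nf_prod List.Exists_flat_map; setoid_rewrite List.Exists_map.
Qed.

Lemma sat_nf_flat A (X : team A) a :
  sat_nf X [:: (a, [::])] <-> forall s, X s -> tsat a s.
Proof.
rewrite /sat_nf List.Exists_cons List.Exists_nil /sat_basic /=.
by split=> [[[]//|[]]|Xa]; left.
Qed.

Definition basic_and (p q : basic) : basic := (FAnd p.1 q.1, List.app p.2 q.2).

Lemma sat_basic_and A (X : team A) p q :
  sat_basic X (basic_and p q) <-> sat_basic X p /\ sat_basic X q.
Proof. by rewrite /sat_basic /= List.Forall_app; firstorder. Qed.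

Lemma sat_nf_and A (X : team A) N M :
  sat_nf X (nf_prod basic_and N M) <-> sat_nf X N /\ sat_nf X M.
Proof.
rewrite sat_nf_prod /sat_nf; setoid_rewrite sat_basic_and.
by do 2 setoid_rewrite List.Exists_exists; firstorder.
Qed.

(* Conjoining p.1 to the witnessed formulas forces their witnesses into the part
   of the team that the split assigns to p; the same device is used for Ex. *)
Definition basic_or (p q : basic) : basic :=
  (FOr p.1 q.1, List.app (List.map (FAnd p.1) p.2) (List.map (FAnd q.1) q.2)).

Lemma sat_basic_or A (X : team A) p q :
  sat_basic X (basic_or p q) <->
  exists Y Z : team A,
    (forall s, X s <-> Y s \/ Z s) /\ sat_basic Y p /\ sat_basic Z q.
Proof.
rewrite /sat_basic /= List.Forall_app !List.Forall_map.
split=> [[Xpq [Xp Xq]]|[Y [Z [XYZ [[Yp Yb] [Zq Zb]]]]]].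
- exists (fun s => X s /\ tsat p.1 s), (fun s => X s /\ tsat q.1 s).
  split; first by move=> s; split=> [Xs|[[]|[]] //]; case: (Xpq s Xs); [left|right].
  split; split=> [s []//|].
  + by apply: List.Forall_impl Xp => b [s [Xs [ps bs]]]; exists s.
  + by apply: List.Forall_impl Xq => b [s [Xs [qs bs]]]; exists s.
- split; first by move=> s /XYZ [/Yp|/Zq]; [left|right].
  split.
  + apply: List.Forall_impl Yb => b [s [Ys bs]].
    by exists s; split; [apply/XYZ; left | split; first exact: Yp].
  + apply: List.Forall_impl Zb => b [s [Zs bs]].
    by exists s; split; [apply/XYZ; right | split; first exact: Zq].
Qed.

Lemma sat_nf_or A (X : team A) N M :
  sat_nf X (nf_prod basic_or N M) <->
  exists Y Z : team A,
    (forall s, X s <-> Y s \/ Z s) /\ sat_nf Y N /\ sat_nf Z M.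
Proof.
rewrite sat_nf_prod /sat_nf; setoid_rewrite sat_basic_or.
do 2 setoid_rewrite List.Exists_exists.
split=> [[p [Np [q [Mq [Y [Z [XYZ [Yp Zq]]]]]]]]|[Y [Z [XYZ [[p [Np Yp]] [q [Mq Zq]]]]]]].
- by exists Y, Z; do !split=> //; [exists p|exists q].
- by exists p; split=> //; exists q; split=> //; exists Y, Z.
Qed.

Definition basic_ex v (p : basic) : basic :=
  (FEx v p.1, List.map (fun b => FEx v (FAnd p.1 b)) p.2).

Lemma sat_basic_ex A (X : team A) v p :
  sat_basic X (basic_ex v p) <->
  exists F : assignment A -> dom A -> Prop,
    (forall s, X s -> exists m, F s m) /\
    sat_basic (fun s' => exists s m, [/\ X s, F s m & s' = upd s v m]) p.
Proof.
rewrite /sat_basic /= List.Forall_map.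
split=> [[Xp Xb]|[F [FX [XFp XFb]]]].
- exists (fun s m => tsat p.1 (upd s v m)); split=> //.
  split=> [_ [s [m [_ pm ->]]] //|].
  apply: List.Forall_impl Xb => b [s [Xs [m [pm bm]]]].
  by exists (upd s v m); split; first exists s, m.
- split=> [s Xs|].
    by have [m Fm] := FX s Xs; exists m; apply: XFp; exists s, m.
  apply: List.Forall_impl XFb => b [_ [[s [m [Xs Fm ->]]] bm]].
  by exists s; split=> //; exists m; split=> //; apply: XFp; exists s, m.
Qed.

Lemma sat_nf_ex A (X : team A) v N :
  sat_nf X (List.map (basic_ex v) N) <->
  exists F : assignment A -> dom A -> Prop,
    (forall s, X s -> exists m, F s m) /\
    sat_nf (fun s' => exists s m, [/\ X s, F s m & s' = upd s v m]) N.
Proof.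
rewrite /sat_nf List.Exists_map; setoid_rewrite sat_basic_ex.
setoid_rewrite List.Exists_exists.
split=> [[p [Np [F [FX XFp]]]]|[F [FX [p [Np XFp]]]]].
- by exists F; split=> //; exists p.
- by exists p; split=> //; exists F.
Qed.

Definition basic_all v (p : basic) : basic := (FAll v p.1, List.map (FEx v) p.2).

Lemma sat_basic_all A (X : team A) v p :
  sat_basic X (basic_all v p) <->
  sat_basic (fun s' => exists s m, X s /\ s' = upd s v m) p.
Proof.
rewrite /sat_basic /= List.Forall_map.
split=> [[Xp Xb]|[Xp Xb]]; split.
- by move=> _ [s [m [Xs ->]]]; apply: Xp.
- apply: List.Forall_impl Xb => b [s [Xs [m bm]]].
  by exists (upd s v m); split; first exists s, m.
- by move=> s Xs m; apply: Xp; exists s, m.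
- apply: List.Forall_impl Xb => b [_ [[s [m [Xs ->]]] bm]].
  by exists s; split; last exists m.
Qed.

Lemma sat_nf_all A (X : team A) v N :
  sat_nf X (List.map (basic_all v) N) <->
  sat_nf (fun s' => exists s m, X s /\ s' = upd s v m) N.
Proof. by rewrite /sat_nf List.Exists_map; setoid_rewrite sat_basic_all. Qed.

Definition basic_neg (p : basic) : seq basic :=
  (ftrue, [:: fneg p.1]) :: List.map (fun b => (fneg b, [::])) p.2.

Lemma sat_nf_basic_neg A (X : team A) p :
  sat_nf X (basic_neg p) <-> ~ sat_basic X p.
Proof.
rewrite /sat_nf List.Exists_cons List.Exists_map /sat_basic /=.
split=> [|nXp].
  case=> [[_ /List.Forall_cons_iff [[s [Xs /tsat_fneg nps]] _]] [Xp _]|].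
    exact: nps (Xp s Xs).
  move=> /List.Exists_exists [b [pb [Xnb _]]] [_ /List.Forall_forall Xb].
  have [s [Xs bs]] := Xb b pb.
  exact: (tsat_fneg b s).1 (Xnb s Xs) bs.
have [Xp|] := classic (forall s, X s -> tsat p.1 s).
- right; have /List.Exists_Forall_neg nXb :
      ~ List.Forall (fun b => exists s, X s /\ tsat b s) p.2.
    by move=> Xb; apply: nXp.
  apply: List.Exists_impl (nXb (fun b => classic _)) => b nb.
  by split=> // s Xs; apply/tsat_fneg => bs; apply: nb; exists s.
- move=> /not_all_ex_not [s] nXs; have [Xs nps] := imply_to_and _ _ nXs.
  by left; split=> //; constructor=> //; exists s; split=> //; apply/tsat_fneg.
Qed.

Definition nf_neg (N : seq basic) : seq basic :=
  foldr (fun p M => nf_prod basic_and (basic_neg p) M) [:: (ftrue, [::])] N.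

Lemma sat_nf_neg A (X : team A) N : sat_nf X (nf_neg N) <-> ~ sat_nf X N.
Proof.
elim: N => [|p N IH] /=.
  by rewrite sat_nf_flat /sat_nf List.Exists_nil; split=> // _ s.
by rewrite sat_nf_and IH sat_nf_basic_neg /sat_nf List.Exists_cons; tauto.
Qed.

Fixpoint nf (phi : formula L) : seq basic :=
  match phi with
  | Eq t1 t2 => [:: (FEq t1 t2, [::])]
  | NEq t1 t2 => [:: (FNEq t1 t2, [::])]
  | Rel _ ts => [:: (FRel ts, [::])]
  | NRel _ ts => [:: (FNRel ts, [::])]
  | And a b => nf_prod basic_and (nf a) (nf b)
  | Or a b => nf_prod basic_or (nf a) (nf b)
  | Ex v a => List.map (basic_ex v) (nf a)
  | All v a => List.map (basic_all v) (nf a)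
  | NE => [:: (ftrue, [:: ftrue])]
  | GOr a b => List.app (nf a) (nf b)
  | CNeg a => nf_neg (nf a)
  end.

Lemma sat_nf_NE A (X : team A) :
  sat_nf X [:: (ftrue, [:: ftrue])] <-> exists s, X s.
Proof.
rewrite /sat_nf /sat_basic List.Exists_cons List.Exists_nil /= List.Forall_cons_iff.
split=> [[[_ [[s [Xs _]] _]]|[]]|[s Xs]]; first by exists s.
by left; do !split=> //; exists s.
Qed.

Lemma sat_nfE phi A (X : team A) : sat phi X <-> sat_nf X (nf phi).
Proof.
elim: phi X => /= [t1 t2|t1 t2|r ts|r ts|a IHa b IHb|a IHa b IHb|v a IH|v a IH|
                   |a IHa b IHb|a IH] X.
- by rewrite sat_nf_flat.
- by rewrite sat_nf_flat.
- by rewrite sat_nf_flat.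
- by rewrite sat_nf_flat.
- by rewrite sat_nf_and IHa IHb.
- by rewrite sat_nf_or; setoid_rewrite IHa; setoid_rewrite IHb.
- by rewrite sat_nf_ex; setoid_rewrite IH.
- by rewrite sat_nf_all IH.
- by rewrite sat_nf_NE.
- by rewrite /sat_nf List.Exists_app -/(sat_nf X _) -/(sat_nf X _) IHa IHb.
- by rewrite sat_nf_neg IH.
Qed.

Definition falsum : formula L := And (NE L) (NEq (@Var L 0) (@Var L 0)).

Definition somewhere (b : fo) : formula L :=
  Or (And (fo_formula b) (NE L)) (fo_formula ftrue).

Lemma sat_somewhere A (X : team A) b :
  sat (somewhere b) X <-> exists s, X s /\ tsat b s.
Proof.
split=> [[Y [Z [XYZ [[/sat_fo Yb [s Ys]] _]]]]|[s [Xs bs]]].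
  by exists s; split; [apply/XYZ; left | apply: Yb].
exists (fun s => X s /\ tsat b s), X.
split; first by move=> s'; split=> [|[[]|]]; auto.
by split; [split; [apply/sat_fo => ? [] | exists s] | apply/sat_fo].
Qed.

Fixpoint all_somewhere (bs : seq fo) : formula L :=
  if bs is b :: bs' then And (somewhere b) (all_somewhere bs')
  else fo_formula ftrue.

Lemma sat_all_somewhere A (X : team A) bs :
  sat (all_somewhere bs) X <-> List.Forall (fun b => exists s, X s /\ tsat b s) bs.
Proof.
elim: bs => [|b bs IH]; first by split=> // _ s.
rewrite -[sat _ X]/(sat (somewhere b) X /\ sat (all_somewhere bs) X).
by rewrite sat_somewhere IH List.Forall_cons_iff.
Qed.

Definition basic_formula (p : basic) : formula L :=
  And (fo_formula p.1) (all_somewhere p.2).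

Lemma sat_basic_formula A (X : team A) p :
  sat (basic_formula p) X <-> sat_basic X p.
Proof. by rewrite /= sat_fo sat_all_somewhere. Qed.

Fixpoint nf_formula (N : seq basic) : formula L :=
  if N is p :: N' then GOr (basic_formula p) (nf_formula N') else falsum.

Lemma sat_nf_formula A (X : team A) N : sat (nf_formula N) X <-> sat_nf X N.
Proof.
rewrite /sat_nf; elim: N => [|p N IH].
  by rewrite List.Exists_nil; split=> // [[[s Xs] /(_ s Xs)]].
rewrite -[sat _ X]/(sat (basic_formula p) X \/ sat (nf_formula N) X).
by rewrite sat_basic_formula IH List.Exists_cons.
Qed.

Lemma neg_free_fo a : neg_free (fo_formula a).
Proof. by elim: a => //= a -> b ->. Qed.

Lemma neg_free_nf_formula N : neg_free (nf_formula N).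
Proof.
elim: N => //= p N ->; rewrite andbT neg_free_fo /=.
by elim: p.2 => //= b bs ->; rewrite !neg_free_fo.
Qed.

End NormalForm.

Theorem mainTheorem18 (L : signature) :
  (forall phi : formula L, exists psi : formula L,
      neg_free psi /\ equivalent phi psi) /\
  (forall psi : formula L, neg_free psi ->
      exists phi : formula L, equivalent psi phi).
Proof.
split=> [phi|psi _]; last by exists psi.
exists (nf_formula (nf phi)); split; first exact: neg_free_nf_formula.
by move=> A X; rewrite sat_nf_formula sat_nfE.
Qed.
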